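(* The metric space defined on the equivalence classes of polygonal curves in $\mathbb{X}_z^{d}$ that have pairwise discrete Fréchet distance $0$, equipped with the discrete Fréchet distance, has doubling dimension $\Theta(dz)$.
   Context: A polygonal curve of complexity $z$ in $\mathbb{R}^d$ is a sequence $\langle p_1,\dots,p_z\rangle$ of points of $\mathbb{R}^d$; $\mathbb{X}_z^d$ is the set of all such curves. A traversal between curves of complexities $z$ and $\ell$ is a sequence of index pairs $(i_1,j_1),\dots,(i_t,j_t)$ with $(i_1,j_1)=(1,1)$, $(i_t,j_t)=(z,\ell)$ and, for $r<t$, $i_{r+1}-i_r\in\{0,1\}$, $j_{r+1}-j_r\in\{0,1\}$, $(i_{r+1}-i_r)+(j_{r+1}-j_r)\ge1$; the discrete Fréchet distance is $\mathbf{d}_{dF}(\langle p_i\rangle,\langle q_j\rangle)=\min_T\max_{(i,j)\in T}\|p_i-q_j\|_2$ over all traversals $T$. The doubling dimension of a metric space is the smallest $t\ge0$ such that every ball can be covered by at most $2^t$ balls of half the radius. *)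

From HB Require Import structures.
From mathcomp Require Import all_boot all_order all_algebra.
From mathcomp Require Import all_classical all_reals.
From mathcomp Require Import exp.
Set Implicit Arguments. Unset Strict Implicit. Unset Printing Implicit Defensive.
Import Order.TTheory GRing.Theory Num.Theory.
Local Open Scope classical_set_scope.
Local Open Scope ring_scope.

Section Frechet.
Variable R : realType.

Definition eucl_dist (d : nat) (p q : 'rV[R]_d) : R :=
  Num.sqrt (\sum_(k < d) (p ord0 k - q ord0 k) ^+ 2).

(** A polygonal curve of complexity z in R^d: z points p_0,...,p_{z-1}
    (0-indexed version of <p_1,...,p_z>). *)
Definition curve (d z : nat) := 'I_z -> 'rV[R]_d.

Definition trav_step (z l : nat) (a b : 'I_z * 'I_l) : bool :=
  [&& (a.1 <= b.1 <= a.1.+1)%N, (a.2 <= b.2 <= a.2.+1)%N & a != b].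

Definition traversal (z l : nat) (T : seq ('I_z * 'I_l)) : bool :=
  if T is x :: T' then
    [&& (x.1 == 0 :> nat), (x.2 == 0 :> nat), path (@trav_step z l) x T',
        ((last x T').1 == z.-1 :> nat) & ((last x T').2 == l.-1 :> nat)]
  else false.

Definition trav_cost (d z l : nat) (p : curve d z) (q : curve d l)
  (T : seq ('I_z * 'I_l)) : R :=
  \big[Num.max/0]_(ij <- T) eucl_dist (p ij.1) (q ij.2).

(** Discrete Frechet distance: minimum (= infimum, the set being finite)
    over traversals of the maximal matched distance. *)
Definition dF (d z l : nat) (p : curve d z) (q : curve d l) : R :=
  inf [set m | exists T, traversal T /\ m = trav_cost p q T].

(** (X, dist) satisfies the doubling condition with exponent t:
    every (closed) ball of radius r > 0 is covered by at most 2^t balls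
    of radius r/2. The doubling dimension is the least such t >= 0. *)
Definition doubling_with (X : Type) (dist : X -> X -> R) (t : R) : Prop :=
  forall (x : X) (r : R), 0 < r ->
    exists (n : nat) (cs : 'I_n -> X),
      n%:R <= 2 `^ t /\
      forall y, dist x y <= r -> exists i : 'I_n, dist (cs i) y <= r / 2.

End Frechet.

From HB Require Import structures.
From mathcomp Require Import all_boot all_order all_algebra.
From mathcomp Require Import all_classical all_reals.
From mathcomp Require Import exp.
From mathcomp Require Import ring lra zify.
Import Order.TTheory GRing.Theory Num.Theory.
Local Open Scope ring_scope.
Set Implicit Arguments. Unset Strict Implicit. Unset Printing Implicit Defensive.

(* Upper bound: if dF x y <= r, a traversal of cost < 2r matches each vertex y_j
   with a vertex x_(f j), f nondecreasing.  Rounding y_j - x_(f j) down to the grid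
   of step r / (2 sqrt d) gives a curve within r/2 of y, determined by f and by z
   integer vectors of l1-norm at most 6d.  Stars and bars encode f by a subset of a
   (2z)-set, and each vector by the prefix sums of its absolute values and its
   signs, so 2^(10 d z) balls of radius r/2 suffice.
   Lower bound: moving each coordinate of the points (3j, 0, ..., 0) by multiples
   of 2^-(2d+2) gives 2^((d+2) d z) curves in the unit ball around the base curve,
   no two of which are within 2^-(2d+4) of a common curve.  Iterating the doubling
   condition 2(d+2) times covers that unit ball by 2^(2(d+2)t) balls of this
   radius, hence t >= d z / 2. *)

Lemma path_cover (T : eqType) (e : rel T) (g : T -> nat) x s n :
  (forall a b, e a b -> (g a <= g b <= (g a).+1)%N) -> path e x s ->
  (g x <= n <= g (last x s))%N -> exists2 p, p \in x :: s & g p = n.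
Proof.
move=> ge; elim: s x => [|y s IH] x /=.
  by move=> _ hn; exists x; rewrite ?mem_head //; lia.
move=> /andP[/ge exy ps] hn.
have [<-|neq] := eqVneq (g x) n; first by exists x; rewrite ?mem_head.
by have [p hp <-] := IH y ps ltac:(lia); exists p; rewrite // in_cons hp orbT.
Qed.

Section Traversals.
Variables z l : nat.
Implicit Types (T : seq ('I_z * 'I_l)) (p q : 'I_z * 'I_l).

Lemma traversal_cover_fst T : traversal T -> forall i : 'I_z, exists j, (i, j) \in T.
Proof.
case: T => // x T /and5P[/eqP x1 _ xT /eqP e1 _] i.
have step (a b : 'I_z * 'I_l) : trav_step a b -> (a.1 <= b.1 <= a.1.+1)%N.
  by case/and3P.
have /(path_cover (g := fun a => nat_of_ord a.1) step xT)[[i' j] hin /val_inj/= ei] :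
    (x.1 <= i <= (last x T).1)%N by have := ltn_ord i; lia.
by exists j; rewrite -ei.
Qed.

Lemma traversal_cover_snd T : traversal T -> forall j : 'I_l, exists i, (i, j) \in T.
Proof.
case: T => // x T /and5P[_ /eqP x2 xT _ /eqP e2] j.
have step (a b : 'I_z * 'I_l) : trav_step a b -> (a.2 <= b.2 <= a.2.+1)%N.
  by case/and3P.
have /(path_cover (g := fun a => nat_of_ord a.2) step xT)[[i j'] hin /val_inj/= ej] :
    (x.2 <= j <= (last x T).2)%N by have := ltn_ord j; lia.
by exists i; rewrite -ej.
Qed.

Definition pair_le p q := ((p.1 <= q.1) && (p.2 <= q.2))%N.

Lemma pair_le_trans : transitive pair_le.
Proof. by move=> q p r /andP[? ?] /andP[? ?]; apply/andP; lia. Qed.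

Lemma traversal_comparable T p q : traversal T -> p \in T -> q \in T ->
  pair_le p q || pair_le q p.
Proof.
case: T => // x T /and5P[_ _ xT _ _].
have : sorted pair_le (x :: T).
  by apply: sub_path xT => a b /and3P[? ? _]; apply/andP; lia.
move: (x :: T) => s; rewrite sorted_pairwise; last exact: pair_le_trans.
move=> /(pairwiseP p) lt_le hp hq.
have idx_lt r : r \in s -> index r s \in gtn (size s).
  by move=> hr; rewrite -topredE /= index_mem.
rewrite -(nth_index p hp) -(nth_index p hq).
have [ij|ji|->] := ltngtP (index p s) (index q s).
- by rewrite lt_le ?idx_lt.
- by rewrite orbC lt_le ?idx_lt.
by rewrite /pair_le !leqnn.
Qed.

Lemma traversal_matching T : traversal T ->
  exists f : 'I_l -> 'I_z,
    {homo f : i j / (i <= j)%N} /\ forall j, (f j, j) \in T.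
Proof.
move=> hT; have [f fT] := boolp.choice (traversal_cover_snd hT).
exists f; split=> // i j; rewrite leq_eqVlt => /orP[/eqP/val_inj->//|ij].
by have := traversal_comparable hT (fT i) (fT j); rewrite /pair_le /=; lia.
Qed.

End Traversals.

Section TraversalCost.
Variables (R : realType) (d z l : nat) (p : curve R d z) (q : curve R d l).
Implicit Type T : seq ('I_z * 'I_l).

Lemma trav_cost_ge0 T : 0 <= trav_cost p q T.
Proof. exact: bigmax_ge_id. Qed.

Lemma le_trav_cost T ij : ij \in T -> eucl_dist (p ij.1) (q ij.2) <= trav_cost p q T.
Proof. by move=> hij; apply: (le_bigmax_seq 0 ij (fun _ => true)). Qed.

Lemma trav_cost_le T e : 0 <= e ->
  (forall ij, ij \in T -> eucl_dist (p ij.1) (q ij.2) <= e) -> trav_cost p q T <= e.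
Proof.
by move=> e0 he; rewrite /trav_cost big_seq_cond; apply: bigmax_le => // ij /andP[/he].
Qed.

Lemma dF_le_trav_cost T : traversal T -> dF p q <= trav_cost p q T.
Proof.
move=> hT; apply: ge_inf; last by exists T.
by exists 0 => _ [T' [_ ->]]; exact: trav_cost_ge0.
Qed.

Lemma dF_lt_trav_cost T0 e : traversal T0 -> dF p q < e ->
  exists T, traversal T /\ trav_cost p q T < e.
Proof.
move=> hT0 /inf_lt[|_ [T [hT ->]] lt_e]; last by exists T.
by exists (trav_cost p q T0), T0.
Qed.

End TraversalCost.

Section Diagonal.
Variables (R : realType) (d n : nat).

Definition diag_trav : seq ('I_n.+1 * 'I_n.+1) :=
  [seq (inord i, inord i) | i <- iota 0 n.+1].

Lemma traversal_diag : traversal diag_trav.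
Proof.
rewrite /diag_trav /= inordK // eqxx /=.
have step i m : (i + m <= n)%N ->
    path (@trav_step n.+1 n.+1) (inord i, inord i)
      [seq (inord k, inord k) | k <- iota i.+1 m].
  elim: m i => [//|m IH] i le_n /=; rewrite IH ?andbT; last lia.
  rewrite /trav_step /= !inordK ?leqnn ?leqnSn //=; try lia.
  by apply/eqP => -[/(congr1 val)]; rewrite /= !inordK; lia.
rewrite step // last_map.
have -> : last 0%N (iota 1 n) = n.
  by case: n {step} => // m; rewrite -[m.+1]addn1 iotaD last_cat addnC.
by rewrite /= inordK ?eqxx.
Qed.

Lemma dF_le_pointwise (p q : curve R d n.+1) e : 0 <= e ->
  (forall j, eucl_dist (p j) (q j) <= e) -> dF p q <= e.
Proof.
move=> e0 pq; apply: le_trans (dF_le_trav_cost p q traversal_diag) _.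
by apply: trav_cost_le => // _ /mapP[i _ ->]; apply: pq.
Qed.

End Diagonal.

Section Euclid.
Variables (R : realType) (d : nat).
Implicit Types (a b : 'rV[R]_d) (e : R).

Lemma coord_le_eucl_dist a b k : `|a ord0 k - b ord0 k| <= eucl_dist a b.
Proof.
rewrite -sqrtr_sqr ler_wsqrtr // (bigD1 k) //= lerDl.
by apply: sumr_ge0 => i _; apply: sqr_ge0.
Qed.

Lemma eucl_dist_le_coord a b e : 0 <= e ->
  (forall k, `|a ord0 k - b ord0 k| <= e) -> eucl_dist a b <= e * Num.sqrt d%:R.
Proof.
move=> e0 ab; rewrite -[e]ger0_norm // -sqrtr_sqr -sqrtrM ?sqr_ge0 // ler_wsqrtr //.
have -> : e ^+ 2 * d%:R = \sum_(k < d) e ^+ 2 by rewrite sumr_const card_ord mulr_natr.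
apply: ler_sum => k _.
by rewrite -real_normK ?num_real // lerXn2r ?nnegrE ?normr_ge0 ?ab.
Qed.

End Euclid.

Lemma floor_norm_le (R : realType) (u : R) :
  `|(Num.floor u)%:~R : R| <= u ^+ 2 / 4 + 2.
Proof.
have /andP[fl_le lt_fl] := floor_itv u; rewrite intrD rmorph1 in lt_fl.
have := sqr_ge0 (u - 2); have := sqr_ge0 (u + 2).
have [s|s] := lerP 0 ((Num.floor u)%:~R : R).
  by rewrite ger0_norm //; nra.
by rewrite ltr0_norm //; nra.
Qed.

Section Grid.
Variables (R : realType) (d : nat) (r : R).
Hypotheses (d_gt0 : (0 < d)%N) (r_gt0 : 0 < r).

Definition grid_step : R := r / (2 * Num.sqrt d%:R).

Definition grid_point (p : 'rV[R]_d) (v : 'I_d -> int) : 'rV[R]_d :=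
  \row_k (p ord0 k + grid_step * (v k)%:~R).

Lemma grid_step_gt0 : 0 < grid_step.
Proof. by rewrite divr_gt0 // mulr_gt0 // sqrtr_gt0 ltr0n. Qed.

Lemma grid_approx (p q : 'rV[R]_d) : eucl_dist p q < 2 * r ->
  exists v, (\sum_k `|v k| <= 6 * d)%N /\ eucl_dist (grid_point p v) q <= r / 2.
Proof.
move=> pq; have s0 := grid_step_gt0; set s := grid_step in s0 *.
pose w k := (q ord0 k - p ord0 k) / s.
have sq_d : Num.sqrt d%:R ^+ 2 = d%:R :> R by rewrite sqr_sqrtr ?ler0n.
have sum_w : \sum_k w k ^+ 2 < 16 * d%:R.
  have -> : \sum_k w k ^+ 2 = eucl_dist p q ^+ 2 / s ^+ 2.
    rewrite sqr_sqrtr ?sumr_ge0 // => [|k _]; last exact: sqr_ge0.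
    rewrite mulr_suml; apply: eq_bigr => k _.
    by rewrite /w expr_div_n -sqrrN opprB.
  rewrite ltr_pdivrMr ?exprn_gt0 // /s /grid_step expr_div_n exprMn sq_d.
  have d0 : 0 < d%:R :> R by rewrite ltr0n.
  have : 0 <= eucl_dist p q := sqrtr_ge0 _.
  have -> : 16 * d%:R * (r ^+ 2 / (2 ^+ 2 * d%:R)) = (2 * r) ^+ 2 :> R.
    by field; rewrite pnatr_eq0 -lt0n.
  by move=> pq0; rewrite ltr_pXn2r ?nnegrE // mulr_ge0 // ltW.
exists (fun k => Num.floor (w k)); split.
  apply: ltnW; rewrite -(ltr_nat R) natr_sum natrM.
  apply: (le_lt_trans (y := \sum_k (w k ^+ 2 / 4 + 2))).
    by apply: ler_sum => k _; rewrite natr_absz intr_norm floor_norm_le.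
  rewrite big_split /= -mulr_suml sumr_const card_ord; lra.
have -> : r / 2 = s * Num.sqrt d%:R.
  have sd0 : Num.sqrt d%:R != 0 :> R by rewrite gt_eqF // sqrtr_gt0 ltr0n.
  by rewrite /s /grid_step; field.
apply: eucl_dist_le_coord (ltW s0) _ => k; rewrite mxE.
have /andP[fl_le lt_fl] := floor_itv (w k); rewrite intrD rmorph1 in lt_fl.
set v := (Num.floor (w k))%:~R in fl_le lt_fl *.
have -> : p ord0 k + s * v - q ord0 k = s * (v - w k) by rewrite /w; field; rewrite gt_eqF.
by rewrite normrM gtr0_norm // ger_pMr // ler_norml; apply/andP; split; lra.
Qed.

End Grid.

Section Codes.
Variables N m : nat.
Implicit Types h : 'I_m -> nat.

(* Stars and bars: [h i + i] is strictly increasing when [h] is nondecreasing. *)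
Definition nondecr_code h : {set 'I_(N + m)} := [set k | [exists i, val k == h i + i]].

Lemma nondecr_code_le h h' (i : 'I_m) :
  {homo h : j k / (j <= k)%N} -> {homo h' : j k / (j <= k)%N} -> (h i <= N)%N ->
  nondecr_code h = nondecr_code h' -> (forall j : 'I_m, (j < i)%N -> h j = h' j) ->
  (h' i <= h i)%N.
Proof.
move=> h_mono h'_mono hiN eq_code eq_lt.
have hk : (h i + i < N + m)%N by have := ltn_ord i; lia.
have : Ordinal hk \in nondecr_code h by rewrite inE; apply/existsP; exists i.
rewrite eq_code inE => /existsP[j /eqP /= ej].
have [ji|ij|/val_inj eij] := ltngtP j i; last by move: ej; rewrite eij; lia.
- by move: ej; rewrite -eq_lt //; have := h_mono _ _ (ltnW ji); lia.
- by move: ej; have := h'_mono _ _ (ltnW ij); lia.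
Qed.

Lemma nondecr_code_inj h h' :
  {homo h : i j / (i <= j)%N} -> {homo h' : i j / (i <= j)%N} ->
  (forall i, h i <= N)%N -> (forall i, h' i <= N)%N ->
  nondecr_code h = nondecr_code h' -> h =1 h'.
Proof.
move=> h_mono h'_mono hN h'N eq_code.
suff eq_lt k (i : 'I_m) : (i < k)%N -> h i = h' i by move=> i; apply: (eq_lt i.+1).
elim: k i => // k IH i; rewrite ltnS leq_eqVlt => /orP[/eqP ik|/IH//].
have eq_lt (j : 'I_m) : (j < i)%N -> h j = h' j by move=> ji; apply: IH; rewrite -ik.
have eq_lt' (j : 'I_m) : (j < i)%N -> h' j = h j by move/eq_lt.
apply/eqP; rewrite eqn_leq (nondecr_code_le h_mono h'_mono (hN i) eq_code eq_lt).
by rewrite (nondecr_code_le h'_mono h_mono (h'N i) (esym eq_code) eq_lt').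
Qed.

End Codes.

Section PrefixSums.
Variable m : nat.
Implicit Types a : 'I_m -> nat.

Definition prefix_sum a (k : 'I_m) := (\sum_(l < m | l <= k) a l)%N.

Lemma prefix_sum_homo a : {homo prefix_sum a : i j / (i <= j)%N}.
Proof.
move=> i j ij; rewrite /prefix_sum !(big_mkcond (fun l : 'I_m => (l <= _)%N)).
by apply: leq_sum => l _; case: ifP => // li; rewrite (leq_trans li ij).
Qed.

Lemma prefix_sum_le a k : (prefix_sum a k <= \sum_l a l)%N.
Proof. by rewrite /prefix_sum [X in (X <= _)%N]big_mkcond leq_sum // => l _; case: ifP. Qed.

Lemma prefix_sum_inj a a' : prefix_sum a =1 prefix_sum a' -> a =1 a'.
Proof.
move=> eq_ps; suff eq_lt k (i : 'I_m) : (i < k)%N -> a i = a' i.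
  by move=> i; apply: (eq_lt i.+1).
elim: k i => // k IH i; rewrite ltnS leq_eqVlt => /orP[/eqP ik|/IH//].
have := eq_ps i; rewrite /prefix_sum (bigD1 i) // [in X in _ = X](bigD1 i) //=.
rewrite (eq_bigr a') => [/addIn //|j /andP[ji /eqP/val_eqP nji]].
by apply: IH; rewrite -ik ltn_neqAle nji ji.
Qed.

End PrefixSums.

Definition l1_code M d (v : 'I_d -> int) : {set 'I_(M + d)} * {set 'I_d} :=
  (nondecr_code M (prefix_sum (fun k => `|v k|%N)), [set k | v k < 0]).

Lemma l1_code_inj M d (v v' : 'I_d -> int) :
  (\sum_k `|v k| <= M)%N -> (\sum_k `|v' k| <= M)%N ->
  l1_code M v = l1_code M v' -> v =1 v'.
Proof.
have bounded (w : 'I_d -> int) k : (\sum_k `|w k| <= M)%N ->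
    (prefix_sum (fun k => `|w k|%N) k <= M)%N.
  exact: leq_trans (prefix_sum_le _ _).
move=> vM v'M [/nondecr_code_inj eq_ps /setP eq_sign] k.
have /prefix_sum_inj eq_abs := eq_ps (prefix_sum_homo _) (prefix_sum_homo _)
  (bounded _ ^~ vM) (bounded _ ^~ v'M).
have := eq_sign k; rewrite !inE => eq_sgn.
by rewrite [v k]intEsign [v' k]intEsign eq_sgn eq_abs.
Qed.

Section Doubling.
Variables (R : realType) (X : Type) (dist : X -> X -> R).

Lemma doubling_with_fin t :
  (forall x r, 0 < r -> exists (F : finType) (c : F -> X), #|F|%:R <= 2 `^ t /\
     forall y, dist x y <= r -> exists i, dist (c i) y <= r / 2) ->
  doubling_with dist t.
Proof.
move=> cover x r r0; have [F [c [cardF cov]]] := cover x r r0.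
exists #|F|, (c \o enum_val); split=> // y /cov[i ci].
by exists (enum_rank i); rewrite /= enum_rankK.
Qed.

Lemma doubling_with_iter t : doubling_with dist t -> forall k x r, 0 < r ->
  exists (F : finType) (c : F -> X), #|F|%:R <= (2 `^ t) ^+ k /\
    forall y, dist x y <= r -> exists i, dist (c i) y <= r / 2 ^+ k.
Proof.
move=> dbl; elim=> [|k IH] x r r0.
  exists 'I_1, (fun _ => x); split; first by rewrite card_ord expr0.
  by move=> y xy; exists ord0; rewrite expr0 divr1.
have [F [c [cardF cov]]] := IH x r r0.
have rk0 : 0 < r / 2 ^+ k by rewrite divr_gt0 // exprn_gt0.
have /boolp.choice[g /all_and2[cardg covg]] : forall i, exists g : {m : nat & 'I_m -> X},
    (projT1 g)%:R <= 2 `^ t /\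
      forall y, dist (c i) y <= r / 2 ^+ k -> exists j, dist (projT2 g j) y <= r / 2 ^+ k / 2.
  move=> i; have [m [ci ciP]] := dbl (c i) _ rk0.
  by exists (existT _ m ci).
exists {i : F & 'I_(projT1 (g i))}, (fun w => projT2 (g (tag w)) (tagged w)); split.
  rewrite card_tagged sumnE big_map big_enum /= natr_sum exprSr.
  apply: le_trans (_ : \sum_(i : F) 2 `^ t <= _).
    by apply: ler_sum => i _; rewrite card_ord.
  by rewrite sumr_const -[_ *+ _]mulr_natr mulrC ler_wpM2r ?powR_ge0.
move=> y /cov[i /covg[j gj]]; exists (existT _ i j).
by rewrite exprSr invfM mulrA.
Qed.

End Doubling.

Lemma factor_through (P C X : Type) (adm : P -> Prop) (enc : P -> C) (g : P -> X)
    (x0 : X) :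
  (forall p p', adm p -> adm p' -> enc p = enc p' -> g p = g p') ->
  exists g' : C -> X, forall p, adm p -> g' (enc p) = g p.
Proof.
move=> g_enc.
have /boolp.choice[g' g'P] : forall c, exists y, forall p, adm p -> enc p = c -> g p = y.
  move=> c; have [[p0 [adm0 <-]]|none] := boolp.pselect (exists p, adm p /\ enc p = c).
    by exists (g p0) => p admp ep; apply: g_enc.
  by exists x0 => p admp ep; case: none; exists p.
by exists g' => p admp; rewrite -(g'P (enc p) p).
Qed.

Section UpperBound.
Variables (R : realType) (d n : nat).
Hypothesis d_gt0 : (0 < d)%N.

Definition grid_param := (('I_n.+1 -> 'I_n.+1) * ('I_n.+1 -> 'I_d -> int))%type.

Definition grid_admissible (fv : grid_param) :=
  {homo fv.1 : i j / (i <= j)%N} /\ forall j, (\sum_k `|fv.2 j k| <= 6 * d)%N.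

Definition grid_code := ({set 'I_(n.+1 + n.+1)} *
  {ffun 'I_n.+1 -> {set 'I_(6 * d + d)} * {set 'I_d}})%type.

Definition encode_grid (fv : grid_param) : grid_code :=
  (nondecr_code n.+1 (fun j => val (fv.1 j)), [ffun j => l1_code (6 * d) (fv.2 j)]).

Lemma card_grid_code : (#|{: grid_code}| <= 2 ^ (10 * (d * n.+1)))%N.
Proof.
have card_set (T : finType) : #|{: {set T}}| = (2 ^ #|T|)%N.
  by rewrite -[LHS]cardsT -powersetT card_powerset cardsT.
rewrite card_prod card_ffun card_prod !card_set !card_ord -!expnD -expnM -expnD.
by rewrite leq_exp2l //; nia.
Qed.

Variables (x : curve R d n.+1) (r : R).
Hypothesis r_gt0 : 0 < r.

Definition grid_curve (f : 'I_n.+1 -> 'I_n.+1) (v : 'I_n.+1 -> 'I_d -> int) :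
    curve R d n.+1 :=
  fun j => grid_point r (x (f j)) (v j).

Lemma encode_grid_inj fv fv' : grid_admissible fv -> grid_admissible fv' ->
  encode_grid fv = encode_grid fv' -> grid_curve fv.1 fv.2 = grid_curve fv'.1 fv'.2.
Proof.
case: fv fv' => f v [f' v'] [/= f_mono vM] [/= f'_mono v'M] [eq_f /ffunP eq_v].
have {}eq_f j : f j = f' j.
  apply/val_inj/(nondecr_code_inj _ _ _ _ eq_f) => // i; exact: ltnW.
have {}eq_v j : v j =1 v' j by move: (eq_v j); rewrite !ffunE; apply: l1_code_inj.
by apply: boolp.funext => j; apply/rowP => k; rewrite /grid_curve !mxE eq_f eq_v.
Qed.

Lemma grid_curve_cover (y : curve R d n.+1) : dF x y <= r ->
  exists fv, grid_admissible fv /\ dF (grid_curve fv.1 fv.2) y <= r / 2.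
Proof.
move=> xy; have lt2r : dF x y < 2 * r by have := r_gt0; lra.
have [T [trT costT]] := dF_lt_trav_cost (traversal_diag n) lt2r.
have [f [f_mono fT]] := traversal_matching trT.
have /boolp.choice[v /all_and2[vM vP]] : forall j, exists w : 'I_d -> int,
    (\sum_k `|w k| <= 6 * d)%N /\ eucl_dist (grid_point r (x (f j)) w) (y j) <= r / 2.
  by move=> j; apply: grid_approx => //; apply: le_lt_trans (le_trav_cost _ _ (fT j)) costT.
by exists (f, v); split; [split | apply: dF_le_pointwise vP; rewrite divr_ge0 // ltW].
Qed.

End UpperBound.

Lemma doubling_dF_upper (R : realType) (d n : nat) : (0 < d)%N ->
  doubling_with (@dF R d n.+1 n.+1) (10 * (d * n.+1)%:R).
Proof.
move=> d_gt0; apply: doubling_with_fin => x r r_gt0.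
have [dec decP] := factor_through x (@encode_grid_inj R d n x r).
exists (grid_code d n), dec; split.
  apply: le_trans (_ : (2 ^ (10 * (d * n.+1)))%:R <= _).
    by rewrite ler_nat card_grid_code.
  by rewrite natrX -powR_mulrn ?ler0n // natrM.
move=> y /(grid_curve_cover d_gt0 r_gt0)[fv [adm_fv fvy]].
by exists (encode_grid fv); rewrite decP.
Qed.

Lemma natr_dist_lt1 (R : realDomainType) (a b : nat) : `|a%:R - b%:R : R| < 1 -> a = b.
Proof.
rewrite ltr_norml => /andP[lo hi]; apply/eqP.
rewrite eqn_leq -[(a <= b)%N]ltnS -[(b <= a)%N]ltnS -!(ltr_nat R) !mulrSr.
by apply/andP; split; lra.
Qed.

Section LowerBound.
Variables (R : realType) (d n : nat).
Hypothesis d_gt0 : (0 < d)%N.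

Definition pack_radius : R := (2 ^+ (2 * (d + 2)))^-1.

Definition pack_step : R := 4 * pack_radius.

Definition pack_base : curve R d n.+1 :=
  fun j => \row_k (if k == 0 :> nat then 3 * (j : nat)%:R else 0).

Definition pack_curve (phi : {ffun 'I_n.+1 * 'I_d -> 'I_(2 ^ (d + 2))}) : curve R d n.+1 :=
  fun j => \row_k (pack_base j ord0 k + pack_step * (phi (j, k) : nat)%:R).

Lemma pack_radius_gt0 : 0 < pack_radius.
Proof. by rewrite invr_gt0 exprn_gt0. Qed.

Lemma pack_offset_bound (a : 'I_(2 ^ (d + 2))) :
  0 <= pack_step * (a : nat)%:R <= (2 ^+ d)^-1.
Proof.
have step0 : 0 <= pack_step by rewrite mulr_ge0 // ltW // pack_radius_gt0.
rewrite mulr_ge0 ?ler0n //=.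
set u : R := 2 ^+ d; have u0 : 0 < u by rewrite exprn_gt0.
have a_le : (a : nat)%:R <= 4 * u :> R.
  have lt_a : (a < 2 ^ d * 2 ^ 2)%N by rewrite -expnD ltn_ord.
  by rewrite /u -natrX -natrM ler_nat; lia.
have -> : pack_step * (a : nat)%:R = (a : nat)%:R / (4 * u) / u.
  have e : 2 ^+ (2 * (d + 2)) = (u * 4) ^+ 2 :> R by rewrite /u mulnC exprM exprD; ring.
  by rewrite /pack_step /pack_radius e; field; rewrite gt_eqF.
by rewrite ler_pdivrMr // mulVf ?gt_eqF // ler_pdivrMr ?mul1r // mulr_gt0.
Qed.

Lemma dF_pack_base phi : dF pack_base (pack_curve phi) <= 1.
Proof.
apply: dF_le_pointwise => // j.
have e0 : 0 <= (2 ^+ d)^-1 :> R by rewrite invr_ge0 exprn_ge0.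
apply: le_trans (eucl_dist_le_coord e0 _) _ => [k|].
  have /andP[o0 o1] := pack_offset_bound (phi (j, k)).
  by rewrite !mxE opprD addrA subrr add0r normrN ger0_norm.
have sqrt_d : Num.sqrt d%:R <= 2 ^+ d :> R.
  rewrite -[X in _ <= X]ger0_norm ?exprn_ge0 // -sqrtr_sqr ler_wsqrtr // -exprM -natrX ler_nat.
  by apply: leq_trans (ltnW (ltn_expl d (ltnSn 1))) _; rewrite leq_exp2l //; lia.
by rewrite mulrC ler_pdivrMr ?exprn_gt0 // mul1r.
Qed.

Lemma pack_step_le1 : pack_step <= 1.
Proof.
rewrite /pack_step /pack_radius ler_pdivrMr ?exprn_gt0 // mul1r -natrX ler_nat.
by rewrite -[4%N]/(2 ^ 2)%N leq_exp2l //; lia.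
Qed.

Lemma pack_curve_close phi phi' j j' :
  (forall k, `|pack_curve phi j ord0 k - pack_curve phi' j' ord0 k| < pack_step) ->
  j = j' /\ forall k, phi (j, k) = phi' (j, k).
Proof.
move=> close; have step1 := pack_step_le1.
have eq_j : j = j'.
  pose k0 : 'I_d := Ordinal d_gt0.
  have /andP[a0 a1] := pack_offset_bound (phi (j, k0)).
  have /andP[b0 b1] := pack_offset_bound (phi' (j', k0)).
  have d1 : (2 ^+ d)^-1 <= 1 :> R by rewrite invf_le1 ?exprn_gt0 // exprn_ege1 // ler1n.
  move: (close k0); rewrite !mxE /= ltr_norml => /andP[lo hi].
  have [jj'|j'j|/val_inj //] := ltngtP j j'; exfalso.
  - have : (j : nat)%:R + 1 <= (j' : nat)%:R :> R by rewrite natr1 ler_nat.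
    lra.
  - have : (j' : nat)%:R + 1 <= (j : nat)%:R :> R by rewrite natr1 ler_nat.
    lra.
split=> // k; apply/val_inj/(@natr_dist_lt1 R).
have step0 : 0 < pack_step by rewrite mulr_gt0 ?pack_radius_gt0.
move: (close k); rewrite -eq_j !mxE opprD addrACA subrr add0r -mulrBr normrM gtr0_norm //.
by rewrite gtr_pMr.
Qed.

Lemma pack_ball_inj (c : curve R d n.+1) phi phi' :
  dF c (pack_curve phi) <= pack_radius -> dF c (pack_curve phi') <= pack_radius -> phi = phi'.
Proof.
have r0 := pack_radius_gt0.
have near psi : dF c (pack_curve psi) <= pack_radius ->
    exists T, traversal T /\ trav_cost c (pack_curve psi) T < 2 * pack_radius.
  by move=> le_r; apply: dF_lt_trav_cost (traversal_diag n) _; lra.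
move=> /near[T [trT costT]] /near[T' [trT' costT']].
apply/ffunP => -[j k].
have [i ij] := traversal_cover_snd trT j.
have [j' ij'] := traversal_cover_fst trT' i.
suff /pack_curve_close[_ ->] : forall k,
  `|pack_curve phi j ord0 k - pack_curve phi' j' ord0 k| < pack_step by [].
move=> k'; set u := c i ord0 k'; set v := pack_curve phi j ord0 k'.
set w := pack_curve phi' j' ord0 k'.
have cv : `|v - u| < 2 * pack_radius.
  rewrite distrC; apply: le_lt_trans (coord_le_eucl_dist _ _ k') _.
  exact: le_lt_trans (le_trav_cost _ _ ij) costT.
have cw : `|u - w| < 2 * pack_radius.
  apply: le_lt_trans (coord_le_eucl_dist _ _ k') _.
  exact: le_lt_trans (le_trav_cost _ _ ij') costT'.
have := ler_distD u v w; rewrite /pack_step; lra.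
Qed.

Lemma doubling_dF_lower (t : R) :
  doubling_with (@dF R d n.+1 n.+1) t -> (d * n.+1)%:R / 2 <= t.
Proof.
move=> dbl.
have [F [c [cardF cover]]] := doubling_with_iter dbl (2 * (d + 2)) pack_base ltr01.
have /boolp.choice[idx idxP] : forall phi, exists i, dF (c i) (pack_curve phi) <= pack_radius.
  move=> phi; have [i ci] := cover _ (dF_pack_base phi).
  by exists i; rewrite /pack_radius -div1r.
have idx_inj : injective idx.
  by move=> phi phi' e; apply: (pack_ball_inj (idxP phi)); rewrite e idxP.
have := leq_card idx idx_inj; rewrite card_ffun card_prod !card_ord -expnM => card_le.
have : (2 ^ ((d + 2) * (n.+1 * d)))%:R <= (2 `^ t) ^+ (2 * (d + 2)) :> R.
  by apply: le_trans cardF; rewrite ler_nat.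
rewrite natrX -!powR_mulrn ?powR_ge0 // -powRrM.
rewrite -ler_ln ?posrE ?powR_gt0 // !ln_powR ler_pM2r ?ln_gt0 ?ltr1n // !natrM natrD.
have : (0 : R) < d%:R by rewrite ltr0n.
nra.
Qed.

End LowerBound.

Unset Implicit Arguments.

Theorem proposition9p1 (R : realType) :
  exists c1 c2 : R, 0 < c1 /\ 0 < c2 /\
    forall d z : nat, (0 < d)%N -> (0 < z)%N ->
      doubling_with (@dF R d z z) (c2 * (d * z)%:R) /\
      (forall t : R, 0 <= t -> doubling_with (@dF R d z z) t ->
         c1 * (d * z)%:R <= t).
Proof.
exists 2^-1, 10; split; first by rewrite invr_gt0.
split=> //.
move=> d [//|n] d_gt0 _; split; first exact: doubling_dF_upper.
by move=> t _ /(doubling_dF_lower d_gt0); rewrite mulrC.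
Qed.
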